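(* Let $R$ be any difference ring and $F,G\subseteq R$. Then $\langle F\rangle_r\cap\langle G\rangle_r=\langle FG\rangle_r$, where $FG=\{fg:f\in F,g\in G\}$. Consequently, if $I$ and $J$ are $\sigma$-ideals of $R$, then $\langle I\rangle_r\cap\langle J\rangle_r=\langle I\cap J\rangle_r=\langle IJ\rangle_r$.
   Context: A difference ring is a commutative unital ring $R$ with a ring endomorphism $\sigma$. A $\sigma$-ideal is an ideal $I$ with $\sigma(I)\subseteq I$; it is well-mixed if $ab\in I$ implies $a\sigma(b)\in I$. $\langle F\rangle_r$ denotes the smallest radical well-mixed $\sigma$-ideal of $R$ containing $F$. *)

From HB Require Import structures.
From mathcomp Require Import all_boot all_order all_algebra.
Set Implicit Arguments. Unset Strict Implicit. Unset Printing Implicit Defensive.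
Import GRing.Theory.
Local Open Scope ring_scope.

Section DiffRing.
Variables (R : comPzRingType) (s : {rmorphism R -> R}).

Definition is_ideal (I : R -> Prop) : Prop :=
  [/\ I 0, (forall a b, I a -> I b -> I (a - b)) & (forall r a, I a -> I (r * a))].

Definition sigma_ideal (I : R -> Prop) : Prop :=
  is_ideal I /\ (forall a, I a -> I (s a)).

Definition well_mixed (I : R -> Prop) : Prop :=
  forall a b, I (a * b) -> I (a * s b).

Definition radical (I : R -> Prop) : Prop :=
  forall a n, I (a ^+ n.+1) -> I a.

Definition radical_wm_sigma_ideal (I : R -> Prop) : Prop :=
  [/\ sigma_ideal I, well_mixed I & radical I].

Definition rwm_closure (F : R -> Prop) : R -> Prop :=
  fun x => forall I, radical_wm_sigma_ideal I -> (forall f, F f -> I f) -> I x.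

End DiffRing.

Definition setI_ {T} (A B : T -> Prop) : T -> Prop := fun x => A x /\ B x.

Definition set_prod {R : comPzRingType} (F G : R -> Prop) : R -> Prop :=
  fun x => exists f g, [/\ F f, G g & x = f * g].

Definition ideal_prod {R : comPzRingType} (I J : R -> Prop) : R -> Prop :=
  fun x => forall K, is_ideal K -> (forall a b, I a -> J b -> K (a * b)) -> K x.

(* The key fact is that for a radical well-mixed sigma-ideal I and any x the
   quotient (I : x) = {y | x y in I} is again a radical well-mixed sigma-ideal
   (well-mixedness is exactly what makes it stable under sigma).  So if FG is
   contained in I, then F lies in (I : g) for each g in G, hence <F>_r does;
   i.e. G lies in (I : a) for each a in <F>_r, hence so does <G>_r.  Thus
   <F>_r <G>_r is contained in <FG>_r, and an element of both closures has its
   square in <FG>_r, so it lies there by radicality.  For sigma-ideals I, J one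
   has IJ inside I n J, and the square of any element of I n J is in IJ. *)

From mathcomp Require Import all_boot all_order all_algebra.
From Stdlib Require Import FunctionalExtensionality PropExtensionality.
Set Implicit Arguments. Unset Strict Implicit.
Import GRing.Theory.
Local Open Scope ring_scope.

Lemma predext {T} (A B : T -> Prop) : (forall x, A x <-> B x) -> A = B.
Proof.
by move=> AB; apply: functional_extensionality => x; apply: propositional_extensionality.
Qed.

Section RadicalWellMixedClosure.
Variables (R : comPzRingType) (s : {rmorphism R -> R}).

Notation rwm := (radical_wm_sigma_ideal s).
Notation cl := (rwm_closure s).

Lemma rwm_mull (I : R -> Prop) r a : rwm I -> I a -> I (r * a).
Proof. by case=> [[[_ _ Imul] _] _ _]; apply: Imul. Qed.

Lemma rwm_mulr (I : R -> Prop) r a : rwm I -> I a -> I (a * r).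
Proof. by rewrite mulrC; apply: rwm_mull. Qed.

Lemma rwm_sqr (I : R -> Prop) a : rwm I -> I (a * a) -> I a.
Proof. by case=> [_ _ Irad] Iaa; apply: (Irad _ 1%N); rewrite expr2. Qed.

Definition ideal_quotient (I : R -> Prop) (x : R) : R -> Prop := fun y => I (x * y).

Lemma rwm_ideal_quotient (I : R -> Prop) x : rwm I -> rwm (ideal_quotient I x).
Proof.
case=> [[[I0 Isub Imul] _] Iwm Irad]; rewrite /ideal_quotient.
split; [split; [split|] | |].
- by rewrite mulr0.
- by move=> a b Ia Ib; rewrite mulrBr; apply: Isub.
- by move=> r a Ia; rewrite mulrCA; apply: Imul.
- by move=> a; apply: Iwm.
- by move=> a b Iab; rewrite mulrA; apply: Iwm; rewrite -mulrA.
- move=> a n Ian; apply: (Irad _ n).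
  have -> : (x * a) ^+ n.+1 = x ^+ n * (x * a ^+ n.+1).
    by rewrite exprMn exprS mulrA (mulrC _ x).
  exact: Imul.
Qed.

Lemma rwm_closure_rwm (F : R -> Prop) : rwm (cl F).
Proof.
split; [split; [split|] | |].
- by move=> I [[[I0 _ _] _] _ _].
- move=> a b Fa Fb I rwmI FI; case: (rwmI) => [[[_ Isub _] _] _ _].
  by apply: Isub; [apply: Fa | apply: Fb].
- by move=> r a Fa I rwmI FI; apply: rwm_mull; last apply: Fa.
- by move=> a Fa I rwmI FI; case: (rwmI) => [[_ Is] _ _]; apply: Is; apply: Fa.
- by move=> a b Fab I rwmI FI; case: (rwmI) => [_ Iwm _]; apply: Iwm; apply: Fab.
- by move=> a n Fan I rwmI FI; case: (rwmI) => [_ _ Irad]; apply: (Irad _ n); apply: Fan.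
Qed.

Lemma rwm_closure_sub (F : R -> Prop) x : F x -> cl F x.
Proof. by move=> Fx I _; apply. Qed.

Lemma rwm_closure_min (F I : R -> Prop) :
  rwm I -> (forall f, F f -> I f) -> forall x, cl F x -> I x.
Proof. by move=> rwmI FI x; apply. Qed.

Lemma rwm_closure_mono (F G : R -> Prop) :
  (forall f, F f -> cl G f) -> forall x, cl F x -> cl G x.
Proof. exact: rwm_closure_min (rwm_closure_rwm G). Qed.

Lemma rwm_closure_eq (F G : R -> Prop) :
  (forall f, F f -> cl G f) -> (forall g, G g -> cl F g) -> cl F = cl G.
Proof. by move=> FG GF; apply: predext => x; split; apply: rwm_closure_mono. Qed.

Lemma rwm_closure_mul (F G : R -> Prop) a b :
  cl F a -> cl G b -> cl (set_prod F G) (a * b).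
Proof.
set I := cl (set_prod F G); have rwmI : rwm I := rwm_closure_rwm _.
move=> Fa; apply: (rwm_closure_min (rwm_ideal_quotient a rwmI)) => g Gg.
rewrite /ideal_quotient mulrC.
apply: (rwm_closure_min (rwm_ideal_quotient g rwmI) _ Fa) => f Ff.
by rewrite /ideal_quotient mulrC; apply: rwm_closure_sub; exists f, g.
Qed.

Lemma rwm_closureI (F G : R -> Prop) :
  setI_ (cl F) (cl G) = cl (set_prod F G).
Proof.
apply: predext => x; split => [[Fx Gx] | FGx].
  by apply: (rwm_sqr (rwm_closure_rwm _)); apply: rwm_closure_mul.
split; apply: (rwm_closure_mono _ FGx) => _ [f [g [Ff Gg ->]]].
- by apply: rwm_mulr (rwm_closure_rwm _) _; apply: rwm_closure_sub.
- by apply: rwm_mull (rwm_closure_rwm _) _; apply: rwm_closure_sub.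
Qed.

Lemma rwm_closure_ideal_prod (F G : R -> Prop) :
  cl (ideal_prod F G) = cl (set_prod F G).
Proof.
apply: rwm_closure_eq => [x FGx | _ [f [g [Ff Gg ->]]]].
  apply: FGx => [|a b Fa Gb]; first by case: (rwm_closure_rwm (set_prod F G)) => [[]].
  by apply: rwm_closure_sub; exists a, b.
by apply: rwm_closure_sub => K _; apply.
Qed.

Lemma rwm_closure_setI_ideal (I J : R -> Prop) :
  is_ideal I -> is_ideal J -> cl (setI_ I J) = cl (set_prod I J).
Proof.
move=> [_ _ Imul] [_ _ Jmul].
apply: rwm_closure_eq => [x [Ix Jx] | _ [a [b [Ia Jb ->]]]].
  by apply: (rwm_sqr (rwm_closure_rwm _)); apply: rwm_closure_sub; exists x, x.
by apply: rwm_closure_sub; split; [rewrite mulrC|]; [apply: Imul | apply: Jmul].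
Qed.

End RadicalWellMixedClosure.

Theorem proposition5p2 (R : comPzRingType) (s : {rmorphism R -> R}) :
  (forall F G : R -> Prop,
     setI_ (rwm_closure s F) (rwm_closure s G) = rwm_closure s (set_prod F G))
  /\
  (forall I J : R -> Prop, sigma_ideal s I -> sigma_ideal s J ->
     setI_ (rwm_closure s I) (rwm_closure s J) = rwm_closure s (setI_ I J)
     /\ rwm_closure s (setI_ I J) = rwm_closure s (ideal_prod I J)).
Proof.
split=> [|I J [idI _] [idJ _]]; first exact: rwm_closureI.
by rewrite rwm_closureI rwm_closure_setI_ideal // rwm_closure_ideal_prod.
Qed.
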